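(* Consider the two-layer system $$\dot{\mathbf{q}}=\mathbf{f}_0(\mathbf{q})+\mathbf{g}_0(\mathbf{q})\boldsymbol{\xi},\qquad \dot{\boldsymbol{\xi}}=\mathbf{f}_1(\mathbf{q},\boldsymbol{\xi})+\mathbf{g}_1(\mathbf{q},\boldsymbol{\xi})\mathbf{u},$$ with $\mathbf{q}\in\mathbb{R}^n$, $\boldsymbol{\xi}\in\mathbb{R}^p$, $\mathbf{u}\in\mathbb{R}^m$ and locally Lipschitz $\mathbf{f}_0,\mathbf{g}_0,\mathbf{f}_1,\mathbf{g}_1$. Let $h_0:\mathbb{R}^n\to\mathbb{R}$ be continuously differentiable, with $\mathcal{C}_0=\{\mathbf{q}:h_0(\mathbf{q})\ge0\}$. Suppose there exist a continuously differentiable $\mathbf{k}_0:\mathbb{R}^n\to\mathbb{R}^p$ and constants $\alpha,\varepsilon>0$ such that for all $\mathbf{q}\in\mathbb{R}^n$ $$L_{\mathbf{f}_0}h_0(\mathbf{q})+L_{\mathbf{g}_0}h_0(\mathbf{q})\mathbf{k}_0(\mathbf{q})\ge-\alpha h_0(\mathbf{q})+\tfrac{1}{\varepsilon}\|L_{\mathbf{g}_0}h_0(\mathbf{q})\|^2.$$ Suppose further there exist a tracking controller $\mathbf{k}:\mathbb{R}^n\times\mathbb{R}^p\to\mathbb{R}^m$, a continuously differentiable $V:\mathbb{R}^n\times\mathbb{R}^p\to\mathbb{R}_{\ge0}$ and constants $\gamma_1,\gamma_2,\gamma>0$ such that for all $(\mathbf{q},\boldsymbol{\xi})$: $\gamma_1\|\boldsymbol{\xi}-\mathbf{k}_0(\mathbf{q})\|^2\le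 V(\mathbf{q},\boldsymbol{\xi})\le\gamma_2\|\boldsymbol{\xi}-\mathbf{k}_0(\mathbf{q})\|^2$ and $\dot V(\mathbf{q},\boldsymbol{\xi})\le-\gamma V(\mathbf{q},\boldsymbol{\xi})$ along the closed-loop system with $\mathbf{u}=\mathbf{k}(\mathbf{q},\boldsymbol{\xi})$. Let $\mu>0$, $h(\mathbf{q},\boldsymbol{\xi})=h_0(\mathbf{q})-\frac{1}{\mu\gamma_1}V(\mathbf{q},\boldsymbol{\xi})$ and $\mathcal{C}=\{(\mathbf{q},\boldsymbol{\xi}):h(\mathbf{q},\boldsymbol{\xi})\ge0\}$. If $\gamma\ge\alpha+\frac{\varepsilon\mu}{4}$, then $\mathcal{C}$ is forward invariant for the closed-loop system with $\mathbf{u}=\mathbf{k}(\mathbf{q},\boldsymbol{\xi})$.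
   Context: $L_{\mathbf{f}_0}h_0(\mathbf{q})=\nabla h_0(\mathbf{q})\cdot\mathbf{f}_0(\mathbf{q})$, $L_{\mathbf{g}_0}h_0(\mathbf{q})=\nabla h_0(\mathbf{q})^\top\mathbf{g}_0(\mathbf{q})$; $\dot V$ denotes the derivative of $V$ along the closed-loop vector field. A set is forward invariant if every closed-loop trajectory starting in it remains in it on its maximal interval of existence. *)

From HB Require Import structures.
From mathcomp Require Import all_boot all_order all_algebra.
From mathcomp Require Import all_classical all_reals all_analysis.
Set Implicit Arguments. Unset Strict Implicit. Unset Printing Implicit Defensive.
Import Order.TTheory GRing.Theory Num.Theory.
Import numFieldNormedType.Exports.
Local Open Scope classical_set_scope.
Local Open Scope ring_scope.

(* Vectors are row vectors 'rV[R]_n.  An input matrix g(q) in R^{n x p}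
   acting on xi in R^p is represented (transposed) as g q : 'M_(p, n),
   so that g(q) xi  is  xi *m g q. *)

Definition dotv {R : realType} {p : nat} (u v : 'rV[R]_p) : R :=
  \sum_(i < p) u ord0 i * v ord0 i.
Definition sqnorm {R : realType} {p : nat} (v : 'rV[R]_p) : R := dotv v v.

Definition C1 {R : realType} {U V : normedModType R} (f : U -> V) : Prop :=
  (forall x, differentiable f x) /\ (forall v : U, continuous (fun x => 'd f x v)).

Definition loc_lipschitz {R : realType} {U V : normedModType R} (f : U -> V) : Prop :=
  forall x : U, exists2 r : R, 0 < r & exists L : R, forall y z : U,
    ball x r y -> ball x r z -> `|f y - f z| <= L * `|y - z|.

Definition LieF {R : realType} {n : nat} (h : 'rV[R]_n -> R) (f : 'rV[R]_n -> 'rV[R]_n)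
  (q : 'rV[R]_n) : R := 'd h q (f q).
Definition LieG {R : realType} {n p : nat} (h : 'rV[R]_n -> R)
  (g : 'rV[R]_n -> 'M[R]_(p, n)) (q : 'rV[R]_n) : 'rV[R]_p :=
  \row_(i < p) 'd h q (row i (g q)).

Definition closed_loop {R : realType} {n p m : nat}
  (f0 : 'rV[R]_n -> 'rV[R]_n) (g0 : 'rV[R]_n -> 'M[R]_(p, n))
  (f1 : 'rV[R]_n * 'rV[R]_p -> 'rV[R]_p) (g1 : 'rV[R]_n * 'rV[R]_p -> 'M[R]_(m, p))
  (k : 'rV[R]_n * 'rV[R]_p -> 'rV[R]_m) (x : 'rV[R]_n * 'rV[R]_p)
  : 'rV[R]_n * 'rV[R]_p :=
  (f0 x.1 + x.2 *m g0 x.1, f1 x + k x *m g1 x).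

Definition forward_invariant {R : realType} {U : normedModType R}
  (F : U -> U) (S : set U) : Prop :=
  forall (T : R) (x : R -> U),
    0 < T ->
    {within [set t | 0 <= t < T], continuous x} ->
    (forall t, 0 < t < T -> is_derive t 1 x (F (x t))) ->
    S (x 0) -> forall t, 0 <= t < T -> S (x t).

From HB Require Import structures.
From mathcomp Require Import all_boot all_order all_algebra.
From mathcomp Require Import all_classical all_reals all_analysis.
From mathcomp Require Import ring lra.
Import Order.TTheory GRing.Theory Num.Theory.
Import numFieldNormedType.Exports.
Local Open Scope classical_set_scope.
Local Open Scope ring_scope.

(* Writing e = xi - k0(q) for the tracking error, the CBF condition and Young's
   inequality give  d/dt h0(q) >= -alpha h0(q) - (eps/4) |e|^2, and the bounds on
   V turn the error term into at most (eps mu / 4) V / (mu gamma1).  Since V decays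
   at rate gamma >= alpha + eps mu / 4, the barrier h = h0 - V / (mu gamma1)
   satisfies  dh/dt >= -alpha h  along closed-loop trajectories, so exp(alpha t) h
   is nondecreasing and h stays nonnegative once it starts nonnegative. *)

Section DiffFst.
Context {R : realType} {U V : normedModType R}.

Lemma differentiable_fst (x : U * V) : differentiable (@fst U V) x.
Proof. by apply: linear_differentiable => y; exact: cvg_fst. Qed.

Lemma diff_fst (x : U * V) : 'd (@fst U V) x = @fst U V :> (U * V -> U).
Proof. by rewrite diff_lin // => y; exact: cvg_fst. Qed.

Lemma differentiable_comp_fst {W : normedModType R} {h : U -> W} {x : U * V} :
  differentiable h x.1 -> differentiable (h \o @fst U V) x.
Proof. exact: differentiable_comp (differentiable_fst x). Qed.

Lemma diff_comp_fst {W : normedModType R} {h : U -> W} {x : U * V} (v : U * V) :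
  differentiable h x.1 -> 'd (h \o @fst U V) x v = 'd h (x.1) (v.1).
Proof. by move=> dh; rewrite (diff_comp (differentiable_fst x) dh) /= diff_fst. Qed.

End DiffFst.

Section RealDerivatives.
Context {R : realType}.

Lemma is_derive_diff_comp {W W' : normedModType R}
    {f : W -> W'} {x : R -> W} {t : R} {d : W} :
  is_derive t 1 x d -> differentiable f (x t) ->
  is_derive t 1 (f \o x) ('d f (x t) d).
Proof.
move=> dx df.
have dxt : differentiable x t by exact/derivable1_diffP/ex_derive.
have dfx : differentiable (f \o x) t := differentiable_comp dxt df.
have := derivableP (diff_derivable (v := 1 : R) dfx).
by rewrite deriveE // diff_comp //= -[d]derive_val deriveE.
Qed.

Lemma is_derive_expRM (a s : R) :
  is_derive s 1 (fun s => expR (a * s)) (expR (a * s) * a).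
Proof.
have da : is_derive s 1 ( *%R a) a.
  by rewrite -[X in is_derive _ _ _ X]mulr1; exact: is_deriveZ.
exact: is_derive1_comp.
Qed.

Lemma linear_comparison_ge0 (alpha T : R) (phi dphi : R -> R) :
  {within [set t | 0 <= t < T], continuous phi} ->
  (forall s, 0 < s < T -> is_derive s 1 phi (dphi s)) ->
  (forall s, 0 < s < T -> - alpha * phi s <= dphi s) ->
  0 <= phi 0 -> forall t, 0 <= t < T -> 0 <= phi t.
Proof.
move=> phic dphiP dphi_ge phi0 t /andP[t0 tT].
have [->|t_neq0] := eqVneq t 0; first exact: phi0.
have {t0 t_neq0}t_gt0 : 0 < t by rewrite lt_def t_neq0.
pose g s := expR (alpha * s) * phi s.
pose dg s := expR (alpha * s) * dphi s + phi s * (expR (alpha * s) * alpha).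
have in_0T s : 0 < s < t -> 0 < s < T.
  by case/andP=> s0 st; rewrite s0 (lt_trans st tT).
have gd s : s \in `]0, t[ -> is_derive s 1 g (dg s).
  rewrite in_itv /= => /in_0T /dphiP dphis.
  exact (is_deriveM (is_derive_expRM alpha s) dphis).
have gc : {within `[0, t], continuous g}.
  have phic' : {within `[0, t], continuous phi}.
    apply: continuous_subspaceW phic => s /=.
    by rewrite in_itv /= => /andP[-> st]; exact: le_lt_trans st tT.
  move=> s; apply: (@continuousM R (subspace `[0, t]) _ phi s _ (phic' s)).
  apply: continuous_subspaceT => {}s; apply: differentiable_continuous.
  exact/derivable1_diffP/ex_derive.
have [c c0t gtg0] := MVT t_gt0 gd gc.
have cT : 0 < c < T by apply: in_0T; rewrite in_itv in c0t.
have dgc_ge0 : 0 <= dg c.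
  have -> : dg c = expR (alpha * c) * (dphi c + alpha * phi c) by rewrite /dg; ring.
  rewrite mulr_ge0 ?expR_ge0 // -lerBlDr sub0r -mulNr.
  exact: dphi_ge.
have : 0 <= g t.
  rewrite -[g t](subrK (g 0)) gtg0 /g mulr0 expR0 mul1r subr0.
  by rewrite addr_ge0 // mulr_ge0 // ltW.
by rewrite /g pmulr_rge0 // expR_gt0.
Qed.

End RealDerivatives.

Lemma young_mulr_ge {R : realFieldType} (eps a b : R) : 0 < eps ->
  - (eps^-1 * (a * a)) - eps / 4 * (b * b) <= a * b.
Proof.
move=> eps_gt0.
have sq_ge0 : 0 <= eps * (b / 2 + a / eps) ^+ 2 by rewrite mulr_ge0 ?sqr_ge0 ?ltW.
have expand : eps * (b / 2 + a / eps) ^+ 2 =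
              eps / 4 * (b * b) + a * b + eps^-1 * (a * a).
  by field; rewrite gt_eqF.
by rewrite expand in sq_ge0; lra.
Qed.

Section Dotv.
Context {R : realType} {p : nat}.

Lemma dotvDr (u v w : 'rV[R]_p) :
  dotv u (v + w) = dotv u v + dotv u w.
Proof. by rewrite /dotv -big_split; apply: eq_bigr => i _; rewrite mxE mulrDr. Qed.

Lemma young_dotv_ge (eps : R) (u v : 'rV[R]_p) : 0 < eps ->
  - (eps^-1 * sqnorm u) - eps / 4 * sqnorm v <= dotv u v.
Proof.
move=> eps_gt0; rewrite /sqnorm /dotv !mulr_sumr -sumrN -sumrB.
by apply: ler_sum => i _; exact: young_mulr_ge.
Qed.

End Dotv.

Section LieDerivatives.
Context {R : realType} {n p : nat}.

Lemma diff_mulmx_LieG (h : 'rV[R]_n -> R)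
    (g : 'rV[R]_n -> 'M[R]_(p, n)) (q : 'rV[R]_n) (xi : 'rV[R]_p) :
  'd h q (xi *m g q) = dotv (LieG h g q) xi.
Proof.
rewrite mulmx_sum_row linear_sum; apply: eq_bigr => i _.
by rewrite linearZ /= mxE mulrC.
Qed.

Lemma diff_drift_ge (f0 : 'rV[R]_n -> 'rV[R]_n)
    (g0 : 'rV[R]_n -> 'M[R]_(p, n)) (h0 : 'rV[R]_n -> R) (k0 : 'rV[R]_n -> 'rV[R]_p)
    (alpha eps : R) (q : 'rV[R]_n) (xi : 'rV[R]_p) :
  0 < eps ->
  LieF h0 f0 q + dotv (LieG h0 g0 q) (k0 q)
    >= - alpha * h0 q + eps^-1 * sqnorm (LieG h0 g0 q) ->
  - alpha * h0 q - eps / 4 * sqnorm (xi - k0 q) <= 'd h0 q (f0 q + xi *m g0 q).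
Proof.
move=> eps_gt0 cbf.
rewrite linearD /= diff_mulmx_LieG -[xi in dotv _ xi](subrK (k0 q)) dotvDr.
have := young_dotv_ge eps (LieG h0 g0 q) (xi - k0 q) eps_gt0.
by rewrite /LieF in cbf; lra.
Qed.

End LieDerivatives.

Lemma barrier_rate_ge {R : realFieldType}
    (alpha eps gamma1 gamma mu h dh E v dv : R) :
  0 < eps -> 0 < gamma1 -> 0 < mu -> alpha + eps * mu / 4 <= gamma ->
  - alpha * h - eps / 4 * E <= dh ->
  0 <= v -> gamma1 * E <= v -> dv <= - gamma * v ->
  - alpha * (h - (mu * gamma1)^-1 * v) <= dh - (mu * gamma1)^-1 * dv.
Proof.
move=> eps_gt0 gamma1_gt0 mu_gt0 gamma_ge dh_ge v_ge0 E_le dv_le.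
set c := (mu * gamma1)^-1.
have c_gt0 : 0 < c by rewrite invr_gt0 mulr_gt0.
have c_eps : c * (eps * mu / 4) = eps / 4 / gamma1.
  by rewrite /c; field; rewrite !gt_eqF.
have err_le : eps / 4 * E <= c * (eps * mu / 4) * v.
  have -> : eps / 4 * E = eps / 4 / gamma1 * (gamma1 * E) by field; rewrite gt_eqF.
  by rewrite c_eps ler_wpM2l // !divr_ge0 // ltW.
have rate_le : c * (eps * mu / 4) * v <= c * (gamma - alpha) * v.
  by apply: ler_wpM2r => //; apply: ler_wpM2l; [exact: ltW | lra].
have dv_le' : c * dv <= c * (- gamma * v) := ler_wpM2l (ltW c_gt0) dv_le.
lra.
Qed.

Theorem theorem12 (R : realType) (n p m : nat)
  (f0 : 'rV[R]_n -> 'rV[R]_n) (g0 : 'rV[R]_n -> 'M[R]_(p, n))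
  (f1 : 'rV[R]_n * 'rV[R]_p -> 'rV[R]_p) (g1 : 'rV[R]_n * 'rV[R]_p -> 'M[R]_(m, p))
  (h0 : 'rV[R]_n -> R) (k0 : 'rV[R]_n -> 'rV[R]_p)
  (k : 'rV[R]_n * 'rV[R]_p -> 'rV[R]_m) (V : 'rV[R]_n * 'rV[R]_p -> R)
  (alpha eps gamma1 gamma2 gamma mu : R) :
  loc_lipschitz f0 -> loc_lipschitz g0 -> loc_lipschitz f1 -> loc_lipschitz g1 ->
  C1 h0 -> C1 k0 -> C1 V ->
  0 < alpha -> 0 < eps ->
  (forall q, LieF h0 f0 q + dotv (LieG h0 g0 q) (k0 q)
             >= - alpha * h0 q + eps^-1 * sqnorm (LieG h0 g0 q)) ->
  0 < gamma1 -> 0 < gamma2 -> 0 < gamma ->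
  (forall x, 0 <= V x) ->
  (forall x, gamma1 * sqnorm (x.2 - k0 x.1) <= V x) ->
  (forall x, V x <= gamma2 * sqnorm (x.2 - k0 x.1)) ->
  (forall x, 'd V x (closed_loop f0 g0 f1 g1 k x) <= - gamma * V x) ->
  0 < mu ->
  gamma >= alpha + eps * mu / 4 ->
  forward_invariant (closed_loop f0 g0 f1 g1 k)
    [set x | 0 <= h0 x.1 - (mu * gamma1)^-1 * V x].
Proof.
move=> _ _ _ _ [h0_diff _] _ [V_diff _] _ eps_gt0 cbf gamma1_gt0 _ _ V_ge0 V_lb _
  V_decay mu_gt0 gamma_ge T x _ x_cont x_deriv.
set c := (mu * gamma1)^-1; set F := closed_loop f0 g0 f1 g1 k.
pose H y := h0 y.1 - c * V y.
apply (@linear_comparison_ge0 _ alpha T (H \o x)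
  (fun s => 'd h0 ((x s).1) ((F (x s)).1) - c * 'd V (x s) (F (x s)))).
- apply: within_continuous_comp x_cont => y _; apply: differentiable_continuous.
  exact: (differentiableB (differentiable_comp_fst (h0_diff y.1))
                          (differentiableZ c (V_diff y))).
- move=> s /x_deriv dx.
  have dh0 := is_derive_diff_comp dx (differentiable_comp_fst (h0_diff (x s).1)).
  rewrite diff_comp_fst // in dh0.
  exact: (is_deriveB dh0 (is_deriveZ c (is_derive_diff_comp dx (V_diff _)))).
- move=> s _; apply: barrier_rate_ge gamma_ge _ (V_ge0 _) (V_lb _) (V_decay _) => //.
  exact: diff_drift_ge.
Qed.
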